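(* Let $X$ be a nonempty set and $\rho:X\times X\to[0,\infty)$ a function with $\rho(x,y)=0$ iff $x=y$ and $\rho(x,y)=\rho(y,x)$ for all $x,y$. Suppose that the topological space $(X,\mathcal T(\rho))$ is Hausdorff and compact, that $\rho$ is coherent, and that $T:X\to X$ satisfies $\rho(Tx,Ty)\le\lambda\rho(x,y)$ for some $\lambda\in[0,1)$ and all $x,y\in X$. Then $T$ has a unique fixed point.
   Context: $\mathcal T(\rho)$ is the topology on $X$ in which $U\subseteq X$ is open iff for every $x\in U$ there is $r>0$ with $B(x,r,\rho)=\{y\in X:\rho(x,y)<r\}\subseteq U$. The function $\rho$ is coherent if for all $a\in X$ and sequences $\{a_n\},\{b_n\}$ in $X$: $\lim_n\rho(a,a_n)=0$ and $\lim_n\rho(a_n,b_n)=0$ imply $\lim_n\rho(a,b_n)=0$. *)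

From Stdlib Require Import Reals List.
Open Scope R_scope.

Definition ball {X : Type} (rho : X -> X -> R) (x : X) (r : R) (y : X) : Prop :=
  rho x y < r.

Definition rho_open {X : Type} (rho : X -> X -> R) (U : X -> Prop) : Prop :=
  forall x, U x -> exists r, r > 0 /\ forall y, ball rho x r y -> U y.

Definition rho_hausdorff {X : Type} (rho : X -> X -> R) : Prop :=
  forall x y : X, x <> y ->
    exists U V : X -> Prop, rho_open rho U /\ rho_open rho V /\
      U x /\ V y /\ (forall z, ~ (U z /\ V z)).

Definition rho_compact {X : Type} (rho : X -> X -> R) : Prop :=
  forall (I : Type) (U : I -> X -> Prop),
    (forall i, rho_open rho (U i)) ->
    (forall x, exists i, U i x) ->
    exists l : list I, forall x, exists i, In i l /\ U i x.

Definition coherent {X : Type} (rho : X -> X -> R) : Prop :=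
  forall (a : X) (an bn : nat -> X),
    Un_cv (fun n => rho a (an n)) 0 ->
    Un_cv (fun n => rho (an n) (bn n)) 0 ->
    Un_cv (fun n => rho a (bn n)) 0.

(* The orbit x_n = T^n x0 satisfies rho(x_n, x_(n+1)) <= lambda^n rho(x0, x1).
   Coherence makes the sets "y stays a positive distance away from the tail
   (x_n)_(n >= N)" open; they increase with N, so by compactness they cannot
   cover X, which yields a cluster point a of the orbit and a subsequence
   x_(m k) -> a.  Coherence moves this to x_(m k + 1) -> a, contractivity gives
   x_(m k + 1) -> T a, and since limits are unique in a Hausdorff space,
   T a = a. *)

From Stdlib Require Import Reals List Lra Lia Classical ClassicalEpsilon.
Open Scope R_scope.

Definition inv_succ (k : nat) : R := 1 / (INR k + 1).

Lemma inv_succ_pos (k : nat) : 0 < inv_succ k.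
Proof.
  unfold inv_succ. apply Rdiv_lt_0_compat; [lra|].
  pose proof (pos_INR k). lra.
Qed.

Lemma cv_inv_succ : Un_cv inv_succ 0.
Proof.
  intros eps Heps. destruct (INR_unbounded (1 / eps)) as [N HN].
  exists N. intros n Hn. unfold R_dist, inv_succ. rewrite Rminus_0_r.
  assert (HnN : INR N <= INR n) by (apply le_INR; lia).
  rewrite Rabs_right by (apply Rle_ge, Rlt_le, inv_succ_pos).
  pose proof (pos_INR n).
  apply (Rmult_lt_reg_r (INR n + 1)); [lra|].
  unfold Rdiv. rewrite Rmult_1_l, Rinv_l by lra.
  apply (Rmult_lt_reg_l (/ eps)); [apply Rinv_0_lt_compat; lra|].
  rewrite Rmult_1_r, <- Rmult_assoc, Rinv_l by lra.
  unfold Rdiv in HN. lra.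
Qed.

Lemma cv_squeeze0 (u v : nat -> R) :
  (forall k, 0 <= u k <= v k) -> Un_cv v 0 -> Un_cv u 0.
Proof.
  intros Huv Hv eps Heps. destruct (Hv eps Heps) as [N HN]. exists N.
  intros n Hn. specialize (HN n Hn). specialize (Huv n). unfold R_dist in *.
  rewrite Rminus_0_r in *. rewrite Rabs_right by lra.
  rewrite Rabs_right in HN by lra. lra.
Qed.

Lemma cv_lt_inv_succ (u : nat -> R) :
  (forall k, 0 <= u k < inv_succ k) -> Un_cv u 0.
Proof.
  intros Hu. apply (cv_squeeze0 u inv_succ); [|exact cv_inv_succ].
  intro k. specialize (Hu k). lra.
Qed.

Lemma cv_scal_pow_subseq (c l : R) (m : nat -> nat) :
  0 <= c -> 0 <= l < 1 -> (forall k, (k <= m k)%nat) ->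
  Un_cv (fun k => c * l ^ m k) 0.
Proof.
  intros Hc Hl Hm eps Heps.
  destruct (pow_lt_1_zero l ltac:(rewrite Rabs_right; lra) (eps / (c + 1)))
    as [N HN]; [apply Rdiv_lt_0_compat; lra|].
  exists N. intros n Hn. unfold R_dist. rewrite Rminus_0_r.
  assert (Hp := HN (m n) ltac:(specialize (Hm n); lia)).
  assert (0 <= l ^ m n) by (apply pow_le; lra).
  rewrite Rabs_right in Hp by lra.
  rewrite Rabs_right by (apply Rle_ge, Rmult_le_pos; lra).
  apply (Rmult_lt_compat_l (c + 1)) in Hp; [|lra].
  replace ((c + 1) * (eps / (c + 1))) with eps in Hp by (field; lra).
  nra.
Qed.

Lemma cv0_eventually_lt (u : nat -> R) :
  (forall k, 0 <= u k) -> Un_cv u 0 ->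
  forall r, r > 0 -> exists N, forall k, (k >= N)%nat -> u k < r.
Proof.
  intros Hu Hcv r Hr. destruct (Hcv r Hr) as [N HN]. exists N.
  intros k Hk. specialize (HN k Hk). unfold R_dist in HN.
  rewrite Rminus_0_r, Rabs_right in HN by (apply Rle_ge, Hu). exact HN.
Qed.

Section CoherentSpace.

Variable X : Type.
Variable rho : X -> X -> R.
Hypothesis rho_nonneg : forall x y, 0 <= rho x y.
Hypothesis rho_refl : forall x, rho x x = 0.

Definition far_from_tail (s : nat -> X) (N : nat) (y : X) : Prop :=
  exists r, r > 0 /\ forall n, (n >= N)%nat -> r <= rho y (s n).

Lemma not_far_from_tail (s : nat -> X) (N : nat) (y : X) :
  ~ far_from_tail s N y -> forall r, r > 0 -> exists n, (n >= N)%nat /\ rho y (s n) < r.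
Proof.
  intros Hy r Hr. apply NNPP. intro Hno. apply Hy. exists r. split; [exact Hr|].
  intros n Hn. apply Rnot_lt_le. intro Hlt. apply Hno. exists n. auto.
Qed.

Lemma far_from_tail_mono (s : nat -> X) (N M : nat) (y : X) :
  (N <= M)%nat -> far_from_tail s N y -> far_from_tail s M y.
Proof.
  intros HNM [r [Hr Hy]]. exists r. split; [exact Hr|]. intros n Hn. apply Hy. lia.
Qed.

(* If no ball around y stayed far from the tail, we could pick z_k with
   rho(y, z_k) -> 0 and tail points s_(n_k) with rho(z_k, s_(n_k)) -> 0;
   coherence would then force rho(y, s_(n_k)) -> 0. *)
Lemma far_from_tail_open (s : nat -> X) (N : nat) :
  coherent rho -> rho_open rho (far_from_tail s N).
Proof.
  intros Hcoh y [r0 [Hr0 Hy]]. apply NNPP. intro Hno.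
  assert (Hz : forall k : nat, exists p : X * nat,
      rho y (fst p) < inv_succ k /\ (snd p >= N)%nat /\
      rho (fst p) (s (snd p)) < inv_succ k).
  { intro k. apply NNPP. intro Hk. apply Hno.
    exists (inv_succ k). split; [apply inv_succ_pos|].
    intros z Hyz. apply NNPP. intro Hz.
    destruct (not_far_from_tail s N z Hz (inv_succ k) (inv_succ_pos k))
      as [n [Hn Hzn]].
    apply Hk. exists (z, n). auto. }
  destruct (choice _ Hz) as [f Hf].
  assert (Hcv : Un_cv (fun k => rho y (s (snd (f k)))) 0).
  { apply (Hcoh y (fun k => fst (f k))); apply cv_lt_inv_succ; intro k;
      split; try apply rho_nonneg; apply (Hf k). }
  destruct (cv0_eventually_lt _ (fun k => rho_nonneg _ _) Hcv r0 Hr0) as [K HK].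
  specialize (HK K (le_n K)). specialize (Hy _ (proj1 (proj2 (Hf K)))). lra.
Qed.

Lemma compact_cluster_point (s : nat -> X) :
  rho_compact rho -> coherent rho ->
  exists a, forall N r, r > 0 -> exists n, (n >= N)%nat /\ rho a (s n) < r.
Proof.
  intros Hcomp Hcoh. apply NNPP. intro Hno.
  assert (Hcover : forall y, exists N, far_from_tail s N y).
  { intro y. apply NNPP. intro Hy. apply Hno. exists y. intros N.
    apply not_far_from_tail. intro HN. apply Hy. exists N. exact HN. }
  destruct (Hcomp nat (far_from_tail s) (fun N => far_from_tail_open s N Hcoh) Hcover)
    as [l Hl].
  set (M := fold_right max 0%nat l).
  assert (HM : forall i, In i l -> (i <= M)%nat).
  { unfold M. clear. induction l as [|j l IH]; simpl; intros i Hi; [contradiction|].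
    destruct Hi as [<-|Hi]; [lia|]. specialize (IH i Hi). lia. }
  destruct (Hl (s M)) as [i [Hi Hfar]].
  destruct (far_from_tail_mono s i M (s M) (HM i Hi) Hfar) as [r [Hr HrM]].
  specialize (HrM M (le_n M)). rewrite rho_refl in HrM. lra.
Qed.

Lemma cluster_point_subseq (s : nat -> X) (a : X) :
  (forall N r, r > 0 -> exists n, (n >= N)%nat /\ rho a (s n) < r) ->
  exists m : nat -> nat, (forall k, (k <= m k)%nat) /\
    Un_cv (fun k => rho a (s (m k))) 0.
Proof.
  intros Ha.
  destruct (choice _ (fun k => Ha k (inv_succ k) (inv_succ_pos k))) as [m Hm].
  exists m. split; [intro k; apply (Hm k)|].
  apply cv_lt_inv_succ. intro k. split; [apply rho_nonneg|apply (Hm k)].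
Qed.

Lemma hausdorff_limit_unique (z : nat -> X) (a b : X) :
  rho_hausdorff rho ->
  Un_cv (fun n => rho a (z n)) 0 -> Un_cv (fun n => rho b (z n)) 0 -> a = b.
Proof.
  intros Hhaus Ha Hb. apply NNPP. intro Hab.
  destruct (Hhaus a b Hab) as [U [V [HU [HV [Ua [Vb Hdis]]]]]].
  destruct (HU a Ua) as [ra [Hra Hballa]].
  destruct (HV b Vb) as [rb [Hrb Hballb]].
  destruct (cv0_eventually_lt _ (fun n => rho_nonneg _ _) Ha ra Hra) as [Na HNa].
  destruct (cv0_eventually_lt _ (fun n => rho_nonneg _ _) Hb rb Hrb) as [Nb HNb].
  apply (Hdis (z (max Na Nb))). split.
  - apply Hballa, HNa. lia.
  - apply Hballb, HNb. lia.
Qed.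

End CoherentSpace.

Section Contraction.

Variable X : Type.
Variable rho : X -> X -> R.
Variable T : X -> X.
Variable lambda : R.
Hypothesis Hl0 : 0 <= lambda.
Hypothesis Hcontr : forall x y, rho (T x) (T y) <= lambda * rho x y.

Lemma iter_step_le (x0 : X) (n : nat) :
  rho (Nat.iter n T x0) (Nat.iter (S n) T x0) <= lambda ^ n * rho x0 (T x0).
Proof.
  induction n as [|n IH]; simpl; [lra|].
  eapply Rle_trans; [apply Hcontr|].
  rewrite Rmult_assoc. apply Rmult_le_compat_l; [exact Hl0|exact IH].
Qed.

Lemma contraction_fixed_point_unique (x y : X) :
  (forall x y, 0 <= rho x y) -> (forall x y, rho x y = 0 -> x = y) ->
  lambda < 1 -> T x = x -> T y = y -> x = y.
Proof.
  intros Hnonneg Hzero Hl1 Hx Hy. apply Hzero.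
  specialize (Hcontr x y). rewrite Hx, Hy in Hcontr.
  specialize (Hnonneg x y). nra.
Qed.

End Contraction.

Theorem mainTheorem3 (X : Type) (x0 : X) (rho : X -> X -> R)
  (rho_nonneg : forall x y, 0 <= rho x y)
  (rho_zero : forall x y, rho x y = 0 <-> x = y)
  (rho_sym : forall x y, rho x y = rho y x)
  (Hhaus : rho_hausdorff rho) (Hcomp : rho_compact rho)
  (Hcoh : coherent rho)
  (T : X -> X) (lambda : R) (Hl0 : 0 <= lambda) (Hl1 : lambda < 1)
  (Hcontr : forall x y, rho (T x) (T y) <= lambda * rho x y) :
  exists! x : X, T x = x.
Proof.
  set (x := fun n => Nat.iter n T x0).
  assert (rho_refl : forall y, rho y y = 0) by (intro y; apply rho_zero; reflexivity).
  destruct (compact_cluster_point X rho rho_nonneg rho_refl x Hcomp Hcoh) as [a Ha].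
  destruct (cluster_point_subseq X rho rho_nonneg x a Ha) as [m [Hm Hxm]].
  assert (Hxm_succ : Un_cv (fun k => rho a (x (S (m k)))) 0).
  { apply (Hcoh a (fun k => x (m k)) _ Hxm).
    apply (cv_squeeze0 _ (fun k => rho x0 (T x0) * lambda ^ m k)).
    - intro k. split; [apply rho_nonneg|].
      rewrite Rmult_comm. apply iter_step_le; assumption.
    - apply cv_scal_pow_subseq; [apply rho_nonneg|lra|exact Hm]. }
  assert (Hxm_succ_T : Un_cv (fun k => rho (T a) (x (S (m k)))) 0).
  { apply (cv_squeeze0 _ (fun k => rho a (x (m k)))); [|exact Hxm].
    intro k. split; [apply rho_nonneg|].
    simpl. eapply Rle_trans; [apply Hcontr|].
    pose proof (rho_nonneg a (x (m k))). nra. }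
  assert (Hfix : T a = a)
    by exact (hausdorff_limit_unique X rho rho_nonneg _ _ _ Hhaus Hxm_succ_T Hxm_succ).
  exists a. split; [exact Hfix|].
  intros y Hy. apply (contraction_fixed_point_unique X rho T lambda Hcontr); auto.
  intros u v. apply rho_zero.
Qed.
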